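(* Let $X$ be a Polish space, $g,h:X\to\mathbb R$ and $\varepsilon>0$. For every closed set $P$, \[\delta(gh,\varepsilon,P)\subseteq\delta_h(g,\tfrac{\varepsilon}{2},P)\cup\delta_g(h,\tfrac{\varepsilon}{2},P),\] and hence, for every countable ordinal $\alpha$, \[\delta^{\omega^\alpha}(gh,\varepsilon,P)\subseteq\delta_h^{\omega^\alpha}(g,\tfrac{\varepsilon}{2},P)\cup\delta_g^{\omega^\alpha}(h,\tfrac{\varepsilon}{2},P).\]
   Context: For real functions $u,v$ on $X$, $\eta>0$ and closed $P$, $O_u(v,\eta,P)$ is the set of $x\in P$ such that every open neighbourhood $U$ of $x$ contains some $y\in U\cap P$ with $|v(y)-v(x)|\,(|u(y)|\vee|u(x)|)\ge\eta$, and $\delta_u(v,\eta,P)=\overline{O_u(v,\eta,P)}$; with $u\equiv1$ this is written $\delta(v,\eta,P)$. Iterates of a derivation $P\mapsto\delta(P)$: $\delta^0(P)=P$, $\delta^{\alpha+1}(P)=\delta(\delta^\alpha(P))$, intersections at limit ordinals; $\delta_u^\alpha(v,\eta,P)$ denotes the $\alpha$-th iterate of $\delta_u(v,\eta,\cdot)$ applied to $P$. *)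

From Stdlib Require Import Reals.
Open Scope R_scope.

Section Metric.
Context {X : Type} (d : X -> X -> R).

Definition is_metric : Prop :=
  (forall x y, 0 <= d x y) /\ (forall x y, d x y = 0 <-> x = y) /\
  (forall x y, d x y = d y x) /\ (forall x y z, d x z <= d x y + d y z).

Definition cauchy_seq (u : nat -> X) : Prop :=
  forall eps, 0 < eps -> exists N, forall m n, (N <= m)%nat -> (N <= n)%nat ->
    d (u m) (u n) < eps.

Definition seq_converges (u : nat -> X) (l : X) : Prop :=
  forall eps, 0 < eps -> exists N, forall n, (N <= n)%nat -> d (u n) l < eps.

Definition complete : Prop :=
  forall u, cauchy_seq u -> exists l, seq_converges u l.

(* a countable dense subset, enumerated with possible gaps (allows X empty) *)
Definition separable : Prop :=
  exists s : nat -> option X, forall x eps, 0 < eps ->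
    exists n y, s n = Some y /\ d x y < eps.

Definition polish : Prop := is_metric /\ complete /\ separable.

Definition is_open (U : X -> Prop) : Prop :=
  forall x, U x -> exists r, 0 < r /\ forall y, d x y < r -> U y.

Definition is_closed (P : X -> Prop) : Prop := is_open (fun x => ~ P x).

Definition closure (A : X -> Prop) : X -> Prop :=
  fun x => forall U, is_open U -> U x -> exists y, U y /\ A y.

Definition O_set (u v : X -> R) (eta : R) (P : X -> Prop) : X -> Prop :=
  fun x => P x /\ forall U, is_open U -> U x ->
    exists y, U y /\ P y /\
      Rabs (v y - v x) * Rmax (Rabs (u y)) (Rabs (u x)) >= eta.

Definition delta_u (u v : X -> R) (eta : R) (P : X -> Prop) : X -> Prop :=
  closure (O_set u v eta P).

Definition delta (v : X -> R) (eta : R) (P : X -> Prop) : X -> Prop :=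
  delta_u (fun _ => 1) v eta P.

End Metric.

Definition subset {X : Type} (A B : X -> Prop) : Prop := forall x, A x -> B x.
Definition union {X : Type} (A B : X -> Prop) : X -> Prop := fun x => A x \/ B x.

(* Countable ordinals as Brouwer trees: zero, successor, sup of a sequence. *)
Inductive ord : Type :=
| OZ : ord
| OS : ord -> ord
| OL : (nat -> ord) -> ord.

Fixpoint oadd (a b : ord) : ord :=
  match b with
  | OZ => a
  | OS b' => OS (oadd a b')
  | OL f => OL (fun n => oadd a (f n))
  end.

Fixpoint omul_nat (a : ord) (n : nat) : ord :=
  match n with
  | O => OZ
  | S n' => oadd (omul_nat a n') a
  end.

Fixpoint oexp_omega (a : ord) : ord :=
  match a with
  | OZ => OS OZ
  | OS a' => OL (fun n => omul_nat (oexp_omega a') n)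
  | OL f => OL (fun n => oexp_omega (f n))
  end.

Fixpoint iter_deriv {X : Type} (D : (X -> Prop) -> (X -> Prop)) (a : ord)
  (P : X -> Prop) : X -> Prop :=
  match a with
  | OZ => P
  | OS a' => D (iter_deriv D a' P)
  | OL f => fun x => forall n, iter_deriv D (f n) P x
  end.

(* For x, y in X,
     |gh(y) - gh(x)| <= |g(y) - g(x)| max(|h(y)|,|h(x)|) + |h(y) - h(x)| max(|g(y)|,|g(x)|),
   so a point at which gh oscillates by eps on P oscillates by eps/2 in one of the two
   weighted senses; together with the finite additivity of every delta_u on closed sets this
   gives the first inclusion, for every closed set in place of P.

   At limits, the iterates of the derivation
   that acts as delta_h(g) on X * {true} and as delta_g(h) on X * {false} are totally ordered by
   inclusion (a Bourbaki-Witt tower argument, needed since a Brouwer tree is not a well-ordered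
   sequence), so the two families of iterates are ordered in the same way and a point lying in
   every union lies in every member of one family.  At successors, omega^(a+1) is the sup of the
   omega^a * n; additivity and the induction hypothesis place a point of
   delta^(omega^a * n) in delta_h^(omega^a * k) and delta_g^(omega^a * (n - k)) for some k <= n,
   and n = 2m yields membership at level omega^a * m on one side, for every m. *)
From Stdlib Require Import Reals Lra Lia Classical FunctionalExtensionality PropExtensionality.
Open Scope R_scope.

Section Topology.
Context {X : Type} (d : X -> X -> R).

Lemma is_open_and (U V : X -> Prop) :
  is_open d U -> is_open d V -> is_open d (fun y => U y /\ V y).
Proof.
  intros HU HV x [Ux Vx].
  destruct (HU x Ux) as [r1 [Hr1 H1]], (HV x Vx) as [r2 [Hr2 H2]].
  exists (Rmin r1 r2); split; [now apply Rmin_pos|].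
  intros y Hy; split.
  - apply H1, Rlt_le_trans with (1 := Hy), Rmin_l.
  - apply H2, Rlt_le_trans with (1 := Hy), Rmin_r.
Qed.

Lemma is_closed_ext (A B : X -> Prop) :
  (forall y, A y <-> B y) -> is_closed d A -> is_closed d B.
Proof.
  intros E HA x nBx.
  destruct (HA x) as [r [Hr H]]; [now rewrite E|].
  exists r; split; [exact Hr|]. intros y Hy. rewrite <- E. now apply H.
Qed.

Lemma is_closed_union (A B : X -> Prop) :
  is_closed d A -> is_closed d B -> is_closed d (union A B).
Proof.
  intros HA HB x Hx. apply not_or_and in Hx as [nA nB].
  destruct (is_open_and _ _ HA HB x (conj nA nB)) as [r [Hr H]].
  exists r; split; [exact Hr|]. intros y Hy [Ay|By]; destruct (H y Hy); auto.
Qed.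

Lemma is_closed_and (A B : X -> Prop) :
  is_closed d A -> is_closed d B -> is_closed d (fun y => A y /\ B y).
Proof.
  intros HA HB x Hx. apply not_and_or in Hx as [nA|nB].
  - destruct (HA x nA) as [r [Hr H]]. exists r; split; [exact Hr|].
    intros y Hy [Ay _]. exact (H y Hy Ay).
  - destruct (HB x nB) as [r [Hr H]]. exists r; split; [exact Hr|].
    intros y Hy [_ By]. exact (H y Hy By).
Qed.

Lemma is_closed_countable_inter (F : nat -> X -> Prop) :
  (forall n, is_closed d (F n)) -> is_closed d (fun y => forall n, F n y).
Proof.
  intros HF x Hx. apply not_all_ex_not in Hx as [n Hn].
  destruct (HF n x Hn) as [r [Hr H]]. exists r; split; [exact Hr|].
  intros y Hy Hall. exact (H y Hy (Hall n)).
Qed.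

Lemma closure_is_closed (A : X -> Prop) : is_closed d (closure d A).
Proof.
  intros x Hx. apply not_all_ex_not in Hx as [U HU].
  apply imply_to_and in HU as [oU HU]. apply imply_to_and in HU as [Ux HU].
  destruct (oU x Ux) as [r [Hr Hball]]. exists r; split; [exact Hr|].
  intros y Hy Hcl. apply HU. exact (Hcl U oU (Hball y Hy)).
Qed.

Lemma closure_mono (A B : X -> Prop) : subset A B -> subset (closure d A) (closure d B).
Proof.
  intros H x Hx U oU Ux. destruct (Hx U oU Ux) as [y [Uy Ay]]. exists y; auto.
Qed.

Lemma closure_sub_closed (A : X -> Prop) : is_closed d A -> subset (closure d A) A.
Proof.
  intros HA x Hx. apply NNPP. intros nAx.
  destruct (Hx _ HA nAx) as [y [nAy Ay]]. exact (nAy Ay).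
Qed.

Lemma closure_union (A B : X -> Prop) :
  subset (closure d (union A B)) (union (closure d A) (closure d B)).
Proof.
  intros x Hx. apply NNPP. intros Hn. apply not_or_and in Hn as [nA nB].
  apply not_all_ex_not in nA as [U HU]. apply imply_to_and in HU as [oU HU].
  apply imply_to_and in HU as [Ux HU].
  apply not_all_ex_not in nB as [V HV]. apply imply_to_and in HV as [oV HV].
  apply imply_to_and in HV as [Vx HV].
  destruct (Hx _ (is_open_and U V oU oV) (conj Ux Vx)) as [y [[Uy Vy] [Ay|By]]].
  - apply HU; now exists y.
  - apply HV; now exists y.
Qed.

End Topology.

Section Oscillation.
Context {X : Type} (d : X -> X -> R).

Definition osc (u v : X -> R) (x y : X) : R :=
  Rabs (v y - v x) * Rmax (Rabs (u y)) (Rabs (u x)).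

Lemma not_O_set_nbhd u v eta (P : X -> Prop) x :
  P x -> ~ O_set d u v eta P x ->
  exists W, is_open d W /\ W x /\ forall y, W y -> P y -> osc u v x y < eta.
Proof.
  intros Px nO.
  assert (nO' : ~ forall U, is_open d U -> U x -> exists y, U y /\ P y /\
                  osc u v x y >= eta) by (intro H; now apply nO).
  apply not_all_ex_not in nO' as [W HW]. apply imply_to_and in HW as [oW HW].
  apply imply_to_and in HW as [Wx HW].
  exists W; repeat split; [exact oW|exact Wx|].
  intros y Wy Py. apply Rnot_ge_lt. intro Hge. apply HW. now exists y.
Qed.

Lemma not_O_set_nbhd_closed u v eta (P : X -> Prop) x :
  is_closed d P -> ~ O_set d u v eta P x ->
  exists W, is_open d W /\ W x /\ forall y, W y -> P y -> osc u v x y < eta.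
Proof.
  intros HP nO. destruct (classic (P x)) as [Px|nPx].
  - now apply not_O_set_nbhd.
  - exists (fun y => ~ P y); repeat split; [exact HP|exact nPx|].
    intros y nPy Py; contradiction.
Qed.

Lemma O_set_sub u v eta (A : X -> Prop) : subset (O_set d u v eta A) A.
Proof. now intros x [Ax _]. Qed.

Lemma O_set_mono u v eta (A B : X -> Prop) :
  subset A B -> subset (O_set d u v eta A) (O_set d u v eta B).
Proof.
  intros H x [Ax HU]. split; [now apply H|].
  intros U oU Ux. destruct (HU U oU Ux) as [y [Uy [Ay Hy]]]. exists y; auto.
Qed.

Lemma O_set_union u v eta (A B : X -> Prop) :
  is_closed d A -> is_closed d B ->
  subset (O_set d u v eta (union A B)) (union (O_set d u v eta A) (O_set d u v eta B)).
Proof.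
  intros HA HB x [ABx HU].
  destruct (classic (O_set d u v eta A x)) as [?|nA]; [now left|].
  destruct (classic (O_set d u v eta B x)) as [?|nB]; [now right|]. exfalso.
  destruct (not_O_set_nbhd_closed u v eta A x HA nA) as [W1 [o1 [W1x H1]]].
  destruct (not_O_set_nbhd_closed u v eta B x HB nB) as [W2 [o2 [W2x H2]]].
  destruct (HU _ (is_open_and d _ _ o1 o2) (conj W1x W2x))
    as [y [[W1y W2y] [[Ay|By] Hge]]].
  - specialize (H1 y W1y Ay). unfold osc in H1. lra.
  - specialize (H2 y W2y By). unfold osc in H2. lra.
Qed.

Lemma Rabs_mul_sub_le_osc (g h : X -> R) x y :
  Rabs (g y * h y - g x * h x) <= osc h g x y + osc g h x y.
Proof.
  unfold osc.
  replace (g y * h y - g x * h x) with ((g y - g x) * h y + g x * (h y - h x)) by ring.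
  eapply Rle_trans; [apply Rabs_triang|]. rewrite !Rabs_mult.
  apply Rplus_le_compat.
  - apply Rmult_le_compat_l; [apply Rabs_pos|apply Rmax_l].
  - rewrite Rmult_comm. apply Rmult_le_compat_l; [apply Rabs_pos|apply Rmax_r].
Qed.

Lemma O_set_mul (g h : X -> R) eps (P : X -> Prop) :
  subset (O_set d (fun _ => 1) (fun x => g x * h x) eps P)
         (union (O_set d h g (eps / 2) P) (O_set d g h (eps / 2) P)).
Proof.
  intros x [Px HU].
  destruct (classic (O_set d h g (eps / 2) P x)) as [?|nA]; [now left|].
  destruct (classic (O_set d g h (eps / 2) P x)) as [?|nB]; [now right|]. exfalso.
  destruct (not_O_set_nbhd h g (eps / 2) P x Px nA) as [W1 [o1 [W1x H1]]].
  destruct (not_O_set_nbhd g h (eps / 2) P x Px nB) as [W2 [o2 [W2x H2]]].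
  destruct (HU _ (is_open_and d _ _ o1 o2) (conj W1x W2x)) as [y [[W1y W2y] [Py Hge]]].
  specialize (H1 y W1y Py). specialize (H2 y W2y Py).
  pose proof (Rabs_mul_sub_le_osc g h x y).
  rewrite Rabs_R1, Rmax_left in Hge by lra. lra.
Qed.

Lemma delta_mul_sub (g h : X -> R) eps (P : X -> Prop) :
  subset (delta d (fun x => g x * h x) eps P)
         (union (delta_u d h g (eps / 2) P) (delta_u d g h (eps / 2) P)).
Proof.
  intros x Hx. apply closure_union.
  exact (closure_mono d _ _ (O_set_mul g h eps P) x Hx).
Qed.

End Oscillation.

Section Derivations.
Context {X : Type} (d : X -> X -> R).

Record derivation (D : (X -> Prop) -> X -> Prop) : Prop := {
  derivation_mono : forall A B, subset A B -> subset (D A) (D B);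
  derivation_closed : forall A, is_closed d (D A);
  derivation_sub : forall A, is_closed d A -> subset (D A) A }.

Definition additive (D : (X -> Prop) -> X -> Prop) : Prop :=
  forall A B, is_closed d A -> is_closed d B -> subset (D (union A B)) (union (D A) (D B)).

Lemma derivation_delta_u u v eta : derivation (delta_u d u v eta).
Proof.
  split.
  - intros A B H. apply closure_mono, O_set_mono, H.
  - intros A. apply closure_is_closed.
  - intros A HA x Hx. apply (closure_sub_closed d A HA).
    exact (closure_mono d _ _ (O_set_sub d u v eta A) x Hx).
Qed.

Lemma additive_delta_u u v eta : additive (delta_u d u v eta).
Proof.
  intros A B HA HB x Hx. apply closure_union.
  exact (closure_mono d _ _ (O_set_union d u v eta A B HA HB) x Hx).
Qed.

End Derivations.

Section Tower.
Variables (T : Type) (E : (T -> Prop) -> T -> Prop) (good : (T -> Prop) -> Prop) (Q : T -> Prop).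
Hypothesis E_mono : forall A B, subset A B -> subset (E A) (E B).
Hypothesis E_sub : forall A, good A -> subset (E A) A.
Hypothesis good_E : forall A, good A -> good (E A).
Hypothesis good_countable_inter :
  forall F : nat -> T -> Prop, (forall n, good (F n)) -> good (fun x => forall n, F n x).
Hypothesis good_Q : good Q.

Inductive tower : (T -> Prop) -> Prop :=
| tower_Q : tower Q
| tower_E A : tower A -> tower (E A)
| tower_inter (F : nat -> T -> Prop) :
    (forall n, tower (F n)) -> tower (fun x => forall n, F n x).

Lemma tower_good A : tower A -> good A.
Proof. induction 1; auto. Qed.

Lemma tower_sub_Q A : tower A -> subset A Q.
Proof.
  induction 1 as [|A TA IH|F TF IH]; intros x Hx; auto.
  - exact (IH x (E_sub A (tower_good A TA) x Hx)).
  - exact (IH 0%nat x (Hx 0%nat)).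
Qed.

(* Bourbaki-Witt's extreme points, for a deflationary E: applying E to a tower element
   strictly above c never drops below c. *)
Definition extreme (c : T -> Prop) : Prop :=
  forall x, tower x -> subset c x -> ~ subset x c -> subset c (E x).

Lemma extreme_tower_split c :
  tower c -> extreme c -> forall x, tower x -> subset c x \/ subset x (E c).
Proof.
  intros Tc Ec x Tx. induction Tx as [|A TA IH|F TF IH].
  - left. now apply tower_sub_Q.
  - destruct IH as [HcA|HAE].
    + destruct (classic (subset A c)) as [HAc|HAc].
      * right. now apply E_mono.
      * left. now apply Ec.
    + right. intros y Hy. exact (HAE y (E_sub A (tower_good A TA) y Hy)).
  - destruct (classic (exists n, subset (F n) (E c))) as [[n Hn]|Hn].
    + right. intros y Hy. exact (Hn y (Hy n)).
    + left. intros y Hy n. destruct (IH n) as [HcF|HFE]; [now apply HcF|].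
      exfalso. apply Hn. now exists n.
Qed.

Lemma tower_extreme c : tower c -> extreme c.
Proof.
  induction 1 as [|A TA IH|F TF IH]; intros x Tx Hcx Hxc.
  - exfalso. apply Hxc. now apply tower_sub_Q.
  - destruct (extreme_tower_split A TA IH x Tx) as [HAx|HxE]; [now apply E_mono|contradiction].
  - destruct (classic (forall n, subset x (E (F n)))) as [Hall|Hex].
    + exfalso. apply Hxc. intros y Hy n.
      exact (E_sub (F n) (tower_good _ (TF n)) y (Hall n y Hy)).
    + apply not_all_ex_not in Hex as [n Hn].
      destruct (extreme_tower_split (F n) (TF n) (IH n) x Tx) as [HFx|]; [|contradiction].
      destruct (classic (subset x (F n))) as [HxF|HxF].
      * destruct (extreme_tower_split (F n) (TF n) (IH n) _ (tower_inter F TF)) as [Hc|Hc].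
        -- exfalso. apply Hxc. intros y Hy. exact (Hc y (HxF y Hy)).
        -- intros y Hy. apply (E_mono _ _ HFx). exact (Hc y Hy).
      * intros y Hy. exact (IH n x Tx HFx HxF y (Hy n)).
Qed.

Lemma tower_chain A B : tower A -> tower B -> subset A B \/ subset B A.
Proof.
  intros TA TB.
  destruct (extreme_tower_split A TA (tower_extreme A TA) B TB) as [H|H]; [now left|right].
  intros y Hy. exact (E_sub A (tower_good A TA) y (H y Hy)).
Qed.

Lemma tower_iter_deriv t : tower (iter_deriv E t Q).
Proof. induction t; simpl; now constructor. Qed.

End Tower.

Section Iterates.
Context {X : Type} (d : X -> X -> R).
Variable D : (X -> Prop) -> X -> Prop.
Hypothesis HD : derivation d D.

Lemma iter_deriv_closed t Q : is_closed d Q -> is_closed d (iter_deriv D t Q).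
Proof.
  intros HQ; induction t; simpl; auto.
  - apply (derivation_closed d D HD).
  - now apply is_closed_countable_inter.
Qed.

Lemma iter_deriv_mono t (A B : X -> Prop) :
  subset A B -> subset (iter_deriv D t A) (iter_deriv D t B).
Proof.
  intros H; induction t as [|t IH|f IH]; simpl; auto.
  - now apply (derivation_mono d D HD).
  - intros x Hx n. exact (IH n x (Hx n)).
Qed.

Lemma iter_deriv_sub t Q : is_closed d Q -> subset (iter_deriv D t Q) Q.
Proof.
  intros HQ; induction t as [|t IH|f IH]; simpl; intros x Hx; auto.
  - apply IH. exact (derivation_sub d D HD _ (iter_deriv_closed t Q HQ) x Hx).
  - exact (IH 0%nat x (Hx 0%nat)).
Qed.

Lemma iter_deriv_oadd a b Q : iter_deriv D (oadd a b) Q = iter_deriv D b (iter_deriv D a Q).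
Proof.
  induction b as [|b IH|f IH]; simpl; auto.
  - now rewrite IH.
  - apply functional_extensionality; intro x. apply propositional_extensionality.
    split; intros Hx n; specialize (Hx n); now rewrite IH in *.
Qed.

Lemma iter_deriv_omul_nat_S t n Q :
  iter_deriv D (omul_nat t (S n)) Q = iter_deriv D t (iter_deriv D (omul_nat t n) Q).
Proof. apply iter_deriv_oadd. Qed.

Lemma iter_deriv_omul_nat_antitone t Q m k :
  is_closed d Q -> (m <= k)%nat ->
  subset (iter_deriv D (omul_nat t k) Q) (iter_deriv D (omul_nat t m) Q).
Proof.
  intros HQ Hmk. induction Hmk as [|k Hmk IH]; intros y Hy; auto.
  apply IH. rewrite iter_deriv_omul_nat_S in Hy.
  exact (iter_deriv_sub t _ (iter_deriv_closed _ Q HQ) y Hy).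
Qed.

End Iterates.

Section JointChain.
Context {X : Type} (d : X -> X -> R).
Variables (D1 D2 : (X -> Prop) -> X -> Prop) (Q1 Q2 : X -> Prop).
Hypotheses (HD1 : derivation d D1) (HD2 : derivation d D2).
Hypotheses (HQ1 : is_closed d Q1) (HQ2 : is_closed d Q2).

Definition slice (S : X * bool -> Prop) (b : bool) : X -> Prop := fun y => S (y, b).

Definition pair_deriv (S : X * bool -> Prop) : X * bool -> Prop :=
  fun p => if snd p then D1 (slice S true) (fst p) else D2 (slice S false) (fst p).

Definition pair_base : X * bool -> Prop := fun p => if snd p then Q1 (fst p) else Q2 (fst p).

Lemma slice_iter_pair_deriv t :
  slice (iter_deriv pair_deriv t pair_base) true = iter_deriv D1 t Q1 /\
  slice (iter_deriv pair_deriv t pair_base) false = iter_deriv D2 t Q2.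
Proof.
  induction t as [|t IH|f IH]; simpl.
  - split; reflexivity.
  - destruct IH as [IH1 IH2]. exact (conj (f_equal D1 IH1) (f_equal D2 IH2)).
  - split; apply functional_extensionality; intro x; apply propositional_extensionality;
      unfold slice; split; intros Hx n; specialize (Hx n); destruct (IH n) as [IH1 IH2];
      [rewrite <- IH1|rewrite <- IH1 in Hx|rewrite <- IH2|rewrite <- IH2 in Hx]; exact Hx.
Qed.

Lemma iter_deriv_joint_chain s t :
  (subset (iter_deriv D1 s Q1) (iter_deriv D1 t Q1) /\
   subset (iter_deriv D2 s Q2) (iter_deriv D2 t Q2)) \/
  (subset (iter_deriv D1 t Q1) (iter_deriv D1 s Q1) /\
   subset (iter_deriv D2 t Q2) (iter_deriv D2 s Q2)).
Proof.
  set (good := fun S => is_closed d (slice S true) /\ is_closed d (slice S false)).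
  assert (Hchain := tower_chain _ pair_deriv good pair_base).
  destruct (slice_iter_pair_deriv s) as [<- <-], (slice_iter_pair_deriv t) as [<- <-].
  destruct Hchain with (A := iter_deriv pair_deriv s pair_base)
                       (B := iter_deriv pair_deriv t pair_base) as [H|H];
    try apply tower_iter_deriv.
  - intros A B H [x []] Hx; simpl in *.
    + refine (derivation_mono d D1 HD1 _ _ _ x Hx). intros y; apply H.
    + refine (derivation_mono d D2 HD2 _ _ _ x Hx). intros y; apply H.
  - intros A [HA1 HA2] [x []] Hx; simpl in *.
    + exact (derivation_sub d D1 HD1 _ HA1 x Hx).
    + exact (derivation_sub d D2 HD2 _ HA2 x Hx).
  - intros A _. split; [apply (derivation_closed d D1 HD1)|apply (derivation_closed d D2 HD2)].
  - intros F HF. split; apply is_closed_countable_inter; intro n; apply (HF n).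
  - now split.
  - left. split; intros y Hy; apply H, Hy.
  - right. split; intros y Hy; apply H, Hy.
Qed.

Lemma iter_deriv_sup_split (f : nat -> ord) x :
  (forall n, iter_deriv D1 (f n) Q1 x \/ iter_deriv D2 (f n) Q2 x) ->
  (forall n, iter_deriv D1 (f n) Q1 x) \/ (forall n, iter_deriv D2 (f n) Q2 x).
Proof.
  intros H.
  destruct (classic (forall n, iter_deriv D1 (f n) Q1 x)) as [?|Hn]; [now left|right].
  apply not_all_ex_not in Hn as [m Hm]. intros n.
  destruct (H n) as [H1n|H2n]; [|exact H2n].
  destruct (iter_deriv_joint_chain (f n) (f m)) as [[Hs _]|[_ Hs]].
  - exfalso. exact (Hm (Hs x H1n)).
  - destruct (H m) as [H1m|H2m]; [contradiction|exact (Hs x H2m)].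
Qed.

End JointChain.

Section Additivity.
Context {X : Type} (d : X -> X -> R).
Variable D : (X -> Prop) -> X -> Prop.
Hypotheses (HD : derivation d D) (HDa : additive d D).

Lemma additive_iter_deriv t : additive d (iter_deriv D t).
Proof.
  induction t as [|t IH|f IH]; intros A B HA HB; simpl.
  - now intros x Hx.
  - intros x Hx. apply HDa; try now apply (iter_deriv_closed d D HD).
    exact (derivation_mono d D HD _ _ (IH A B HA HB) x Hx).
  - intros x Hx. apply (iter_deriv_sup_split d D D A B HD HD HA HB f x).
    intro n. exact (IH n A B HA HB x (Hx n)).
Qed.

Definition finite_union (K : nat -> X -> Prop) (n : nat) : X -> Prop :=
  fun y => exists k, (k <= n)%nat /\ K k y.

Lemma finite_union_S K n y :
  finite_union K (S n) y <-> union (finite_union K n) (K (S n)) y.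
Proof.
  split.
  - intros [k [Hk Hy]]. destruct (Nat.eq_dec k (S n)) as [->|Hne]; [now right|].
    left. exists k; split; [lia|exact Hy].
  - intros [[k [Hk Hy]]|Hy]; [exists k; split; [lia|exact Hy]|now exists (S n)].
Qed.

Lemma finite_union_closed K :
  (forall k, is_closed d (K k)) -> forall n, is_closed d (finite_union K n).
Proof.
  intros HK n. induction n as [|n IH].
  - apply (is_closed_ext d (K 0%nat)); [|apply HK].
    intros y; split; [now exists 0%nat|].
    intros [k [Hk Hy]]. now replace k with 0%nat in Hy by lia.
  - apply (is_closed_ext d (union (finite_union K n) (K (S n)))).
    + intro y. symmetry. apply finite_union_S.
    + now apply is_closed_union.
Qed.

Lemma additive_finite_union (G : (X -> Prop) -> X -> Prop) :
  (forall A B, subset A B -> subset (G A) (G B)) -> additive d G ->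
  forall K, (forall k, is_closed d (K k)) ->
  forall n, subset (G (finite_union K n)) (finite_union (fun k => G (K k)) n).
Proof.
  intros Gm Ga K HK n. induction n as [|n IH]; intros y Hy.
  - exists 0%nat; split; [lia|]. refine (Gm _ _ _ y Hy).
    intros z [k [Hk Hz]]. now replace k with 0%nat in Hz by lia.
  - assert (Hy' := Gm _ _ (fun z => proj1 (finite_union_S K n z)) y Hy).
    destruct (Ga _ _ (finite_union_closed K HK n) (HK (S n)) y Hy') as [H1|H1].
    + destruct (IH y H1) as [k [Hk Hk']]. exists k; split; [lia|exact Hk'].
    + now exists (S n).
Qed.

End Additivity.

Section OmegaPowers.
Context {X : Type} (d : X -> X -> R).
Variables D D1 D2 : (X -> Prop) -> X -> Prop.
Hypotheses (HD : derivation d D) (HDa : additive d D).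
Hypotheses (HD1 : derivation d D1) (HD2 : derivation d D2).

Definition splits (t : ord) : Prop :=
  forall Q, is_closed d Q ->
  subset (iter_deriv D t Q) (union (iter_deriv D1 t Q) (iter_deriv D2 t Q)).

Lemma splits_omul_nat t Q n y :
  splits t -> is_closed d Q -> iter_deriv D (omul_nat t n) Q y ->
  exists k, (k <= n)%nat /\
    iter_deriv D1 (omul_nat t k) Q y /\ iter_deriv D2 (omul_nat t (n - k)) Q y.
Proof.
  intros Ht HQ. revert y. induction n as [|n IH]; intros y Hy.
  - exists 0%nat. simpl in *. auto.
  - rewrite iter_deriv_omul_nat_S in Hy.
    set (K := fun k z => iter_deriv D1 (omul_nat t k) Q z /\
                         iter_deriv D2 (omul_nat t (n - k)) Q z).
    assert (HK : forall k, is_closed d (K k)).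
    { intro k. apply is_closed_and; now apply iter_deriv_closed. }
    assert (Hy1 : iter_deriv D t (finite_union K n) y).
    { refine (iter_deriv_mono d D HD t _ _ _ y Hy). exact IH. }
    destruct (additive_finite_union d (iter_deriv D t) (iter_deriv_mono d D HD t)
                (additive_iter_deriv d D HD HDa t) K HK n y Hy1) as [k [Hk Hyk]].
    destruct (Ht (K k) (HK k) y Hyk) as [HL|HR].
    + exists (S k); split; [lia|split].
      * rewrite iter_deriv_omul_nat_S.
        refine (iter_deriv_mono d D1 HD1 t _ _ _ y HL). now intros z [].
      * replace (S n - S k)%nat with (n - k)%nat by lia.
        apply (iter_deriv_sub d D1 HD1 t (K k) (HK k) y HL).
    + exists k; split; [lia|split].
      * apply (iter_deriv_sub d D2 HD2 t (K k) (HK k) y HR).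
      * replace (S n - k)%nat with (S (n - k)) by lia. rewrite iter_deriv_omul_nat_S.
        refine (iter_deriv_mono d D2 HD2 t _ _ _ y HR). now intros z [].
Qed.

Lemma splits_omega_mul t : splits t -> splits (OL (omul_nat t)).
Proof.
  intros Ht Q HQ x Hx; simpl in *.
  assert (Heach : forall m, iter_deriv D1 (omul_nat t m) Q x \/
                            iter_deriv D2 (omul_nat t m) Q x).
  { intro m. destruct (splits_omul_nat t Q (m + m) x Ht HQ (Hx _)) as [k [Hk [H1 H2]]].
    destruct (Compare_dec.le_lt_dec m k) as [Hmk|Hmk].
    - left. exact (iter_deriv_omul_nat_antitone d D1 HD1 t Q m k HQ Hmk x H1).
    - right. refine (iter_deriv_omul_nat_antitone d D2 HD2 t Q m _ HQ _ x H2). lia. }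
  destruct (classic (forall m, iter_deriv D1 (omul_nat t m) Q x)) as [?|Hn]; [now left|right].
  apply not_all_ex_not in Hn as [m0 Hm0]. intros m.
  assert (Hb : iter_deriv D2 (omul_nat t (m + m0)) Q x).
  { destruct (Heach (m + m0)%nat) as [Hc|Hc]; [|exact Hc]. exfalso. apply Hm0.
    refine (iter_deriv_omul_nat_antitone d D1 HD1 t Q m0 _ HQ _ x Hc). lia. }
  refine (iter_deriv_omul_nat_antitone d D2 HD2 t Q m _ HQ _ x Hb). lia.
Qed.

Lemma splits_oexp_omega : splits (oexp_omega OZ) -> forall a, splits (oexp_omega a).
Proof.
  intros H0 a. induction a as [|a IH|f IH]; [exact H0| |].
  - exact (splits_omega_mul _ IH).
  - intros Q HQ x Hx.
    apply (iter_deriv_sup_split d D1 D2 Q Q HD1 HD2 HQ HQ (fun n => oexp_omega (f n)) x).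
    intro n. exact (IH n Q HQ x (Hx n)).
Qed.

End OmegaPowers.

Theorem proposition4p4 (X : Type) (d : X -> X -> R) (HX : polish d)
  (g h : X -> R) (eps : R) (Heps : 0 < eps) (P : X -> Prop)
  (HP : is_closed d P) :
  subset (delta d (fun x => g x * h x) eps P)
         (union (delta_u d h g (eps / 2) P) (delta_u d g h (eps / 2) P)) /\
  (forall alpha : ord,
     subset (iter_deriv (delta d (fun x => g x * h x) eps) (oexp_omega alpha) P)
            (union (iter_deriv (delta_u d h g (eps / 2)) (oexp_omega alpha) P)
                   (iter_deriv (delta_u d g h (eps / 2)) (oexp_omega alpha) P))).
Proof.
  split; [apply delta_mul_sub|].
  intro alpha.
  refine (splits_oexp_omega d _ _ _ (derivation_delta_u d _ _ _) (additive_delta_u d _ _ _)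
            (derivation_delta_u d _ _ _) (derivation_delta_u d _ _ _) _ alpha P HP).
  intros Q _. apply delta_mul_sub.
Qed.
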